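(* Let $0\le\theta_1\le\theta_2\le\theta_3\le\theta_4<2\pi$ with $\theta_4-\theta_3\neq\theta_2-\theta_1$, and on $(\mathbb C^2)^{\otimes3}$ define $|\Phi_1\rangle=|000\rangle+e^{i\theta_1}|111\rangle$, $|\Phi_2\rangle=|001\rangle+e^{i\theta_2}|110\rangle$, $|\Phi_3\rangle=|010\rangle+e^{i\theta_3}|101\rangle$, $|\Phi_4\rangle=|011\rangle+e^{i\theta_4}|100\rangle$, and $|\Psi_k\rangle$ the same vectors with the plus signs replaced by minus signs ($k=1,\dots,4$). Then: (i) the orthogonal complement of $\mathrm{span}\{|\Phi_k\rangle\}$ equals $\mathrm{span}\{|\Psi_k\rangle\}$, and neither $\mathrm{span}\{|\Phi_k\rangle\}$ nor $\mathrm{span}\{|\Psi_k\rangle\}$ contains a nonzero fully product vector $|a\rangle|b\rangle|c\rangle$ (so both $\{|\Phi_k\rangle\}$ and $\{|\Psi_k\rangle\}$ are unextendible bases); (ii) the set $\{|\Phi_1\rangle,\dots,|\Phi_4\rangle\}$ (normalized) is perfectly distinguishable by LOCC among the three parties.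
   Context: A set $T$ of linearly independent pure states is an unextendible basis if the orthogonal complement of $\mathrm{span}(T)$ contains no nonzero fully product vector. ''Perfectly distinguishable by LOCC'': a finite-round protocol of local measurements with broadcast outcomes identifies the given state with probability 1. *)

From Stdlib Require Import Reals List.
Import ListNotations.
Open Scope R_scope.

Definition C : Type := (R * R)%type.
Definition C0 : C := (0, 0).
Definition C1 : C := (1, 0).
Definition RtoC (r : R) : C := (r, 0).
Definition Cadd (z w : C) : C := (fst z + fst w, snd z + snd w).
Definition Copp (z : C) : C := (- fst z, - snd z).
Definition Cmul (z w : C) : C :=
  (fst z * fst w - snd z * snd w, fst z * snd w + snd z * fst w).
Definition Cconj (z : C) : C := (fst z, - snd z).
Definition Cexpi (t : R) : C := (cos t, sin t).
Definition Cnorm2 (z : C) : R := fst z * fst z + snd z * snd z.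

Definition sumb (f : bool -> C) : C := Cadd (f false) (f true).
Fixpoint Csum (n : nat) (f : nat -> C) : C :=
  match n with O => C0 | S m => Cadd (Csum m f) (f m) end.

(** * Three-qubit vectors: (C^2)^{⊗3}, indexed by (x,y,z) with false=0, true=1 *)
Definition vec : Type := bool -> bool -> bool -> C.
Definition vec_eq (u v : vec) : Prop := forall x y z, u x y z = v x y z.
Definition vzero : vec := fun _ _ _ => C0.
Definition vadd (u v : vec) : vec := fun x y z => Cadd (u x y z) (v x y z).
Definition vscale (c : C) (v : vec) : vec := fun x y z => Cmul c (v x y z).
Definition inner (u v : vec) : C :=
  sumb (fun x => sumb (fun y => sumb (fun z => Cmul (Cconj (u x y z)) (v x y z)))).
Definition vnorm2 (v : vec) : R :=
  Rplus (Rplus (Rplus (Cnorm2 (v false false false)) (Cnorm2 (v false false true)))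
               (Rplus (Cnorm2 (v false true false)) (Cnorm2 (v false true true))))
        (Rplus (Rplus (Cnorm2 (v true false false)) (Cnorm2 (v true false true)))
               (Rplus (Cnorm2 (v true true false)) (Cnorm2 (v true true true)))).
Definition normalize (v : vec) : vec := vscale (RtoC (/ sqrt (vnorm2 v))) v.

Definition ket (a b c : bool) : vec :=
  fun x y z => if andb (andb (Bool.eqb x a) (Bool.eqb y b)) (Bool.eqb z c) then C1 else C0.

Definition pairvec (a b c : bool) (s : R) (t : R) : vec :=
  vadd (ket a b c) (vscale (Cmul (RtoC s) (Cexpi t)) (ket (negb a) (negb b) (negb c))).

(** Phi_{k+1} for k = 0,1,2,3 (paper's indices 1..4). *)
Definition PhiS (t1 t2 t3 t4 : R) (k : nat) : vec :=
  match k with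
  | 0%nat => pairvec false false false 1 t1
  | 1%nat => pairvec false false true 1 t2
  | 2%nat => pairvec false true false 1 t3
  | _ => pairvec false true true 1 t4
  end.
Definition PsiS (t1 t2 t3 t4 : R) (k : nat) : vec :=
  match k with
  | 0%nat => pairvec false false false (-1) t1
  | 1%nat => pairvec false false true (-1) t2
  | 2%nat => pairvec false true false (-1) t3
  | _ => pairvec false true true (-1) t4
  end.

Definition lincomb (f : nat -> vec) (n : nat) (c : nat -> C) : vec :=
  fun x y z => Csum n (fun k => Cmul (c k) (f k x y z)).
Definition in_span (f : nat -> vec) (n : nat) (v : vec) : Prop :=
  exists c : nat -> C, vec_eq v (lincomb f n c).
Definition orth_compl (f : nat -> vec) (n : nat) (v : vec) : Prop :=
  forall w, in_span f n w -> inner w v = C0.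
Definition lin_indep (f : nat -> vec) (n : nat) : Prop :=
  forall c : nat -> C, vec_eq (lincomb f n c) vzero -> forall k, (k < n)%nat -> c k = C0.
Definition is_product (v : vec) : Prop :=
  exists a b c : bool -> C, vec_eq v (fun x y z => Cmul (Cmul (a x) (b y)) (c z)).
Definition unextendible_basis (f : nat -> vec) (n : nat) : Prop :=
  lin_indep f n /\
  forall v, orth_compl f n v -> is_product v -> vec_eq v vzero.

Inductive party := PA | PB | PC.
(** a local operator on C^2, K i j = <i|K|j> *)
Definition M2 : Type := bool -> bool -> C.

Definition apply_local (p : party) (K : M2) (v : vec) : vec :=
  match p with
  | PA => fun x y z => sumb (fun x' => Cmul (K x x') (v x' y z))
  | PB => fun x y z => sumb (fun y' => Cmul (K y y') (v x y' z))
  | PC => fun x y z => sumb (fun z' => Cmul (K z z') (v x y z'))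
  end.

(** A protocol tree: at a node, party [who] measures with Kraus operators
    (one per outcome); the outcome is broadcast and determines the subtree.
    At a leaf, the parties announce a guess (an index). *)
Inductive protocol :=
| Leaf (guess : nat)
| Node (who : party) (branches : list (M2 * protocol)).

Definition complete (Ks : list M2) : Prop :=
  forall i j : bool,
    fold_right Cadd C0 (map (fun K => sumb (fun l => Cmul (Cconj (K l i)) (K l j))) Ks)
    = if Bool.eqb i j then C1 else C0.

Fixpoint valid (p : protocol) : Prop :=
  match p with
  | Leaf _ => True
  | Node _ bs =>
      complete (map fst bs) /\
      (fix vl (bs : list (M2 * protocol)) : Prop :=
         match bs with
         | [] => True
         | (_, q) :: r => valid q /\ vl r
         end) bs
  end.

(** probability (Born rule, unnormalized input allowed) that the protocol
    run on state [v] ends at a leaf guessing [k] *)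
Fixpoint succ_prob (p : protocol) (v : vec) (k : nat) : R :=
  match p with
  | Leaf g => if Nat.eqb g k then vnorm2 v else 0
  | Node w bs =>
      (fix s (bs : list (M2 * protocol)) : R :=
         match bs with
         | [] => 0
         | (K, q) :: r => succ_prob q (apply_local w K v) k + s r
         end) bs
  end.

Definition perfectly_distinguishable_LOCC (f : nat -> vec) (n : nat) : Prop :=
  exists p : protocol, valid p /\
    forall k, (k < n)%nat -> succ_prob p (normalize (f k)) k = 1.

(** Each state of the theorem has the form |abc> + f |a'b'c'>, a computational
  basis ket plus a multiple of its bitwise complement.  We study the family
  [pair_family f] of four such states built on |000>, |001>, |010>, |011>
  for an arbitrary coefficient function [f], and prove:
  - its span is cut out by four linear relations v(a'b'c') = f_k v(abc);
  - for unimodular coefficients its orthogonal complement is the span of the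
    family with coefficients -f_k;
  - if all f_k are nonzero and f_0 f_3 <> f_1 f_2, the span contains no
    nonzero product vector: the Segre relations of a product vector force
    (f_0 f_3 - f_1 f_2)(v000 v011)^2 = 0 and then v = 0;
  - for any [f], measuring every qubit in the computational basis and
    announcing the parity pattern (x xor y, x xor z) identifies the state.
  The theorem follows with f_k = ±e^{iθ_k}: the angle constraints give
  e^{i(θ_1+θ_4)} <> e^{i(θ_2+θ_3)}, i.e. the non-degeneracy condition. *)
From Stdlib Require Import Reals Lra Lia Psatz List.
Import ListNotations.
Open Scope R_scope.

(** Subtraction, required by the [ring_theory] interface. *)
Definition Csub (a b : C) : C := Cadd a (Copp b).

Lemma Ceq_intro (a b : C) : fst a = fst b -> snd a = snd b -> a = b.
Proof. destruct a, b; simpl; intros; subst; reflexivity. Qed.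

Lemma C_ring_theory : ring_theory C0 C1 Cadd Cmul Csub Copp (@eq C).
Proof.
  constructor; intros; apply Ceq_intro;
    unfold Cadd, Cmul, Csub, Copp, C0, C1; simpl; ring.
Qed.
Add Ring C_ring : C_ring_theory.

Lemma Cconj_mul (a b : C) : Cconj (Cmul a b) = Cmul (Cconj a) (Cconj b).
Proof. apply Ceq_intro; unfold Cconj, Cmul; simpl; ring. Qed.

Lemma Cnorm2_mul (a b : C) : Cnorm2 (Cmul a b) = Cnorm2 a * Cnorm2 b.
Proof. unfold Cnorm2, Cmul; simpl; ring. Qed.

Lemma Cnorm2_nonneg (a : C) : 0 <= Cnorm2 a.
Proof. unfold Cnorm2; nra. Qed.

Lemma Cnorm2_eq0 (a : C) : Cnorm2 a = 0 -> a = C0.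
Proof.
  destruct a as [x y]; unfold Cnorm2; simpl; intros H.
  assert (x = 0) by nra; assert (y = 0) by nra; subst; reflexivity.
Qed.

(** [C] has no zero divisors (via multiplicativity of the squared modulus). *)
Lemma Cmul_integral (a b : C) : Cmul a b = C0 -> a = C0 \/ b = C0.
Proof.
  intros H.
  assert (Hn : Cnorm2 a * Cnorm2 b = 0).
  { rewrite <- Cnorm2_mul, H; unfold Cnorm2, C0; simpl; ring. }
  apply Rmult_integral in Hn as [Ha | Hb]; [left | right]; apply Cnorm2_eq0; assumption.
Qed.

Lemma Csqr_eq0 (a : C) : Cmul a a = C0 -> a = C0.
Proof. intros H; destruct (Cmul_integral _ _ H); assumption. Qed.

Definition unimodular (z : C) : Prop := Cmul (Cconj z) z = C1.

Lemma unimodular_neq0 (z : C) : unimodular z -> z <> C0.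
Proof.
  intros Hz E; subst; revert Hz; unfold unimodular, Cmul, Cconj, C0, C1; simpl.
  intros H; inversion H; lra.
Qed.

Lemma unimodular_solve (h a b : C) :
  unimodular h -> Cadd a (Cmul (Cconj h) b) = C0 -> b = Cmul (Copp h) a.
Proof.
  intros Hh Hab.
  transitivity (Cmul (Cmul (Cconj h) h) b); [rewrite Hh; ring |].
  transitivity (Cmul (Copp h) (Csub a (Cadd a (Cmul (Cconj h) b)))); [ring |].
  rewrite Hab; ring.
Qed.

Definition phase (s t : R) : C := Cmul (RtoC s) (Cexpi t).

Lemma Cexpi_add (a b : R) : Cmul (Cexpi a) (Cexpi b) = Cexpi (a + b).
Proof. apply Ceq_intro; unfold Cmul, Cexpi; simpl; rewrite ?cos_plus, ?sin_plus; ring. Qed.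

Lemma phase_one (t : R) : phase 1 t = Cexpi t.
Proof. apply Ceq_intro; unfold phase, RtoC, Cmul; simpl; ring. Qed.

Lemma phase_neg (t : R) : phase (-1) t = Copp (phase 1 t).
Proof. apply Ceq_intro; unfold phase, RtoC, Cmul, Copp; simpl; ring. Qed.

Lemma phase_unimodular (s t : R) : s * s = 1 -> unimodular (phase s t).
Proof.
  intros Hs; pose proof (sin2_cos2 t) as Ht; unfold Rsqr in Ht.
  apply Ceq_intro; unfold unimodular, phase, RtoC, Cexpi, Cmul, Cconj, C1; simpl; nra.
Qed.

Lemma Cexpi_eq1_small (d : R) : -(2 * PI) < d < 2 * PI -> Cexpi d = C1 -> d = 0.
Proof.
  intros Hd E.
  assert (Hcos : cos d = 1) by (change (fst (Cexpi d) = fst C1); rewrite E; reflexivity).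
  assert (Hpos : forall x, 0 < x < 2 * PI -> cos x <> 1).
  { intros x Hx Hcx; replace x with (2 * (x / 2)) in Hcx by field.
    rewrite cos_2a_sin in Hcx; assert (0 < sin (x / 2)) by (apply sin_gt_0; lra); nra. }
  destruct (Rtotal_order d 0) as [Hneg | [Hz | Hp]]; [| assumption |].
  - exfalso; apply (Hpos (- d)); [lra | rewrite cos_neg; assumption].
  - exfalso; apply (Hpos d); [lra | assumption].
Qed.

Lemma phase_nondegenerate (t1 t2 t3 t4 : R) :
  0 <= t1 -> t1 <= t2 -> t2 <= t3 -> t3 <= t4 -> t4 < 2 * PI ->
  t4 - t3 <> t2 - t1 ->
  Cmul (phase 1 t1) (phase 1 t4) <> Cmul (phase 1 t2) (phase 1 t3).
Proof.
  intros h1 h2 h3 h4 h5 h6 E.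
  assert (Esum : Cexpi (t1 + t4) = Cexpi (t2 + t3)).
  { rewrite <- !Cexpi_add, <- !phase_one; exact E. }
  assert (Ediff : Cexpi (t1 + t4 - (t2 + t3)) = C1).
  { unfold Rminus; rewrite <- Cexpi_add, Esum, Cexpi_add, Rplus_opp_r.
    apply Ceq_intro; simpl; [apply cos_0 | apply sin_0]. }
  apply Cexpi_eq1_small in Ediff; lra.
Qed.

Definition pair_state (a b c : bool) (f : C) : vec :=
  vadd (ket a b c) (vscale f (ket (negb a) (negb b) (negb c))).

Definition pair_family (f : nat -> C) (k : nat) : vec :=
  match k with
  | 0%nat => pair_state false false false (f 0%nat)
  | 1%nat => pair_state false false true (f 1%nat)
  | 2%nat => pair_state false true false (f 2%nat)
  | _ => pair_state false true true (f 3%nat)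
  end.

Definition pair_relations (f : nat -> C) (v : vec) : Prop :=
  v true true true = Cmul (f 0%nat) (v false false false) /\
  v true true false = Cmul (f 1%nat) (v false false true) /\
  v true false true = Cmul (f 2%nat) (v false true false) /\
  v true false false = Cmul (f 3%nat) (v false true true).

Ltac unfold_pairs := unfold pair_family, pair_state, vadd, vscale, ket.

Lemma span_pair_family (f : nat -> C) (v : vec) :
  in_span (pair_family f) 4 v <-> pair_relations f v.
Proof.
  split.
  - intros [c Hc]; unfold vec_eq, lincomb in Hc; unfold pair_relations.
    rewrite !Hc; unfold_pairs; cbn [Csum andb Bool.eqb negb]; repeat split; ring.
  - intros (H0 & H1 & H2 & H3).
    exists (fun k => match k with
             | 0%nat => v false false false | 1%nat => v false false true
             | 2%nat => v false true false | _ => v false true true end).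
    intros x y z; unfold lincomb.
    destruct x, y, z; unfold_pairs; cbn [Csum andb Bool.eqb negb];
      rewrite ?H0, ?H1, ?H2, ?H3; ring.
Qed.

Lemma pair_family_in_span (f : nat -> C) (k : nat) :
  in_span (pair_family f) 4 (pair_family f k).
Proof.
  apply span_pair_family; unfold pair_relations.
  destruct k as [|[|[|[|k]]]]; unfold_pairs; cbn [andb Bool.eqb negb]; repeat split; ring.
Qed.

(** Each member has a coefficient 1 on its own base ket and 0 on the others. *)
Lemma pair_family_lin_indep (f : nat -> C) : lin_indep (pair_family f) 4.
Proof.
  intros c Hc k Hk; unfold vec_eq, lincomb, vzero in Hc.
  pose proof (Hc false false false) as E0; pose proof (Hc false false true) as E1.
  pose proof (Hc false true false) as E2; pose proof (Hc false true true) as E3.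
  unfold pair_family, pair_state, vadd, vscale, ket in E0, E1, E2, E3.
  cbn [Csum andb Bool.eqb negb] in E0, E1, E2, E3.
  destruct k as [|[|[|[|k]]]]; try lia;
    [rewrite <- E0 | rewrite <- E1 | rewrite <- E2 | rewrite <- E3]; ring.
Qed.

Lemma inner_pair_state (a b c : bool) (f : C) (v : vec) :
  inner (pair_state a b c f) v = Cadd (v a b c) (Cmul (Cconj f) (v (negb a) (negb b) (negb c))).
Proof.
  destruct a, b, c; apply Ceq_intro;
    unfold inner, sumb, pair_state, vadd, vscale, ket, Cadd, Cmul, Cconj, C0, C1; simpl; ring.
Qed.

Lemma pair_family_orth_compl (h g : nat -> C) :
  (forall k, (k < 4)%nat -> unimodular (h k)) ->
  (forall k, (k < 4)%nat -> g k = Copp (h k)) ->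
  forall v, orth_compl (pair_family h) 4 v <-> in_span (pair_family g) 4 v.
Proof.
  intros Hh Hg v.
  rewrite span_pair_family; unfold pair_relations.
  rewrite (Hg 0%nat), (Hg 1%nat), (Hg 2%nat), (Hg 3%nat) by lia.
  split.
  - intros Horth.
    assert (Hk : forall k, (k < 4)%nat -> inner (pair_family h k) v = C0).
    { intros k _; apply Horth, pair_family_in_span. }
    pose proof (Hk 0%nat ltac:(lia)) as E0; pose proof (Hk 1%nat ltac:(lia)) as E1.
    pose proof (Hk 2%nat ltac:(lia)) as E2; pose proof (Hk 3%nat ltac:(lia)) as E3.
    simpl pair_family in E0, E1, E2, E3; rewrite inner_pair_state in E0, E1, E2, E3.
    repeat split; (apply unimodular_solve; [apply Hh; lia | assumption]).
  - intros (V0 & V1 & V2 & V3) w Hw.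
    apply span_pair_family in Hw as (W0 & W1 & W2 & W3).
    assert (Expand : inner w v =
      Cadd (Cadd (Cadd
        (Cmul (Cmul (Cconj (w false false false)) (v false false false))
              (Csub C1 (Cmul (Cconj (h 0%nat)) (h 0%nat))))
        (Cmul (Cmul (Cconj (w false false true)) (v false false true))
              (Csub C1 (Cmul (Cconj (h 1%nat)) (h 1%nat)))))
        (Cmul (Cmul (Cconj (w false true false)) (v false true false))
              (Csub C1 (Cmul (Cconj (h 2%nat)) (h 2%nat)))))
        (Cmul (Cmul (Cconj (w false true true)) (v false true true))
              (Csub C1 (Cmul (Cconj (h 3%nat)) (h 3%nat))))).
    { unfold inner, sumb; rewrite V0, V1, V2, V3, W0, W1, W2, W3, !Cconj_mul; ring. }
    rewrite Expand, (Hh 0%nat), (Hh 1%nat), (Hh 2%nat), (Hh 3%nat) by lia; ring.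
Qed.

Lemma product_relations (v : vec) :
  is_product v ->
  Cmul (v false false true) (v true true false) = Cmul (v false false false) (v true true true) /\
  Cmul (v false true false) (v true false true) = Cmul (v false false false) (v true true true) /\
  Cmul (v false true true) (v true false false) = Cmul (v false false false) (v true true true) /\
  Cmul (v false false false) (v false true true) = Cmul (v false false true) (v false true false).
Proof. intros (a & b & c & Hv); rewrite !Hv; repeat split; ring. Qed.

(** The algebraic core: with c_k = v(base k), the pair relations turn the
    Segre relations into f_k c_k^2 = f_0 c_0^2 and c_0 c_3 = c_1 c_2, whose
    only solution under non-degeneracy is c = 0. *)
Lemma pair_quadrics_trivial (f0 f1 f2 f3 c0 c1 c2 c3 : C) :
  f0 <> C0 -> f1 <> C0 -> f2 <> C0 -> f3 <> C0 -> Cmul f0 f3 <> Cmul f1 f2 ->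
  Cmul f1 (Cmul c1 c1) = Cmul f0 (Cmul c0 c0) ->
  Cmul f2 (Cmul c2 c2) = Cmul f0 (Cmul c0 c0) ->
  Cmul f3 (Cmul c3 c3) = Cmul f0 (Cmul c0 c0) ->
  Cmul c0 c3 = Cmul c1 c2 ->
  c0 = C0 /\ c1 = C0 /\ c2 = C0 /\ c3 = C0.
Proof.
  intros n0 n1 n2 n3 nf P1 P2 P3 Q.
  assert (Hsq : Cmul (Cmul c0 c3) (Cmul c0 c3) = Cmul (Cmul c1 c1) (Cmul c2 c2))
    by (rewrite Q; ring).
  assert (Hdet : Cmul (Csub (Cmul f0 f3) (Cmul f1 f2)) (Cmul (Cmul c0 c3) (Cmul c0 c3)) = C0).
  { transitivity (Csub (Cmul (Cmul f0 f3) (Cmul (Cmul c0 c3) (Cmul c0 c3)))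
                       (Cmul (Cmul f1 f2) (Cmul (Cmul c0 c3) (Cmul c0 c3)))); [ring |].
    rewrite Hsq at 2.
    transitivity (Csub (Cmul (Cmul f0 (Cmul c0 c0)) (Cmul f3 (Cmul c3 c3)))
                       (Cmul (Cmul f1 (Cmul c1 c1)) (Cmul f2 (Cmul c2 c2)))); [ring |].
    rewrite P1, P2, P3; ring. }
  assert (H03 : Cmul c0 c3 = C0).
  { destruct (Cmul_integral _ _ Hdet) as [E | E]; [| apply Csqr_eq0; exact E].
    exfalso; apply nf.
    transitivity (Cadd (Csub (Cmul f0 f3) (Cmul f1 f2)) (Cmul f1 f2)); [ring | rewrite E; ring]. }
  assert (Hp : Cmul f0 (Cmul c0 c0) = C0).
  { apply Csqr_eq0.
    transitivity (Cmul (Cmul f0 f3) (Cmul (Cmul c0 c3) (Cmul c0 c3)));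
      [rewrite <- P3 at 2; ring | rewrite H03; ring]. }
  assert (Hroot : forall f c, f <> C0 -> Cmul f (Cmul c c) = C0 -> c = C0).
  { intros f c Hf Hc; destruct (Cmul_integral _ _ Hc) as [|Hcc];
      [contradiction | apply Csqr_eq0; exact Hcc]. }
  repeat split; [apply (Hroot f0) | apply (Hroot f1) | apply (Hroot f2) | apply (Hroot f3)];
    try assumption; rewrite ?P1, ?P2, ?P3; exact Hp.
Qed.

Lemma pair_span_no_product (f : nat -> C) (v : vec) :
  (forall k, (k < 4)%nat -> f k <> C0) ->
  Cmul (f 0%nat) (f 3%nat) <> Cmul (f 1%nat) (f 2%nat) ->
  in_span (pair_family f) 4 v -> is_product v -> vec_eq v vzero.
Proof.
  intros Hf Hdet Hspan Hprod.
  apply span_pair_family in Hspan as (V0 & V1 & V2 & V3).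
  destruct (product_relations v Hprod) as (S1 & S2 & S3 & Q).
  rewrite V0, V1, V2, V3 in *.
  assert (Hshuffle : forall a c, Cmul c (Cmul a c) = Cmul a (Cmul c c)) by (intros; ring).
  rewrite !Hshuffle in S1, S2, S3.
  destruct (pair_quadrics_trivial (f 0%nat) (f 1%nat) (f 2%nat) (f 3%nat)
              (v false false false) (v false false true) (v false true false) (v false true true))
    as (Z0 & Z1 & Z2 & Z3); try (apply Hf; lia); try assumption.
  - intros x y z; unfold vzero; destruct x, y, z;
      rewrite ?V0, ?V1, ?V2, ?V3, ?Z0, ?Z1, ?Z2, ?Z3; ring.
Qed.

(** The parity pattern (x xor y, x xor z) of a basis ket, read as a number:
    it equals k exactly on the two kets supporting [pair_family f k]. *)
Definition label (x y z : bool) : nat :=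
  (2 * Nat.b2n (xorb x y) + Nat.b2n (xorb x z))%nat.

Definition proj (b : bool) : M2 :=
  fun i j => if andb (Bool.eqb i b) (Bool.eqb j b) then C1 else C0.

Definition measure_C (x y : bool) : protocol :=
  Node PC [(proj false, Leaf (label x y false)); (proj true, Leaf (label x y true))].
Definition measure_B (x : bool) : protocol :=
  Node PB [(proj false, measure_C x false); (proj true, measure_C x true)].
Definition basis_protocol : protocol :=
  Node PA [(proj false, measure_B false); (proj true, measure_B true)].

Lemma proj_complete : complete [proj false; proj true].
Proof.
  intros i j; destruct i, j; apply Ceq_intro;
    unfold proj, sumb, Cadd, Cmul, Cconj, C0, C1; simpl; ring.
Qed.

Lemma basis_protocol_valid : valid basis_protocol.
Proof. simpl; repeat split; apply proj_complete. Qed.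

(** Sum of a real function over the eight basis kets, shaped like [vnorm2]. *)
Definition vsum (g : bool -> bool -> bool -> R) : R :=
  (g false false false + g false false true) + (g false true false + g false true true) +
  ((g true false false + g true false true) + (g true true false + g true true true)).

Lemma vnorm2_vsum (v : vec) : vnorm2 v = vsum (fun x y z => Cnorm2 (v x y z)).
Proof. reflexivity. Qed.

Lemma apply_proj (p : party) (b : bool) (v : vec) (x y z : bool) :
  apply_local p (proj b) v x y z
  = if Bool.eqb (match p with PA => x | PB => y | PC => z end) b then v x y z else C0.
Proof.
  destruct p, b, x, y, z; apply Ceq_intro;
    unfold apply_local, proj, sumb, Cadd, Cmul, C0, C1; simpl; ring.
Qed.

Lemma vnorm2_measured (x y z : bool) (v : vec) :
  vnorm2 (apply_local PC (proj z) (apply_local PB (proj y) (apply_local PA (proj x) v)))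
  = Cnorm2 (v x y z).
Proof.
  unfold vnorm2; rewrite !apply_proj.
  destruct x, y, z; simpl; unfold Cnorm2, C0; simpl; ring.
Qed.

Lemma succ_prob_basis (v : vec) (k : nat) :
  succ_prob basis_protocol v k
  = vsum (fun x y z => if Nat.eqb (label x y z) k then Cnorm2 (v x y z) else 0).
Proof.
  cbn [succ_prob basis_protocol measure_B measure_C]; rewrite !vnorm2_measured.
  unfold vsum; ring.
Qed.

Definition supported_on_label (k : nat) (v : vec) : Prop :=
  forall x y z, label x y z <> k -> v x y z = C0.

Lemma succ_prob_supported (k : nat) (v : vec) :
  supported_on_label k v -> succ_prob basis_protocol v k = vnorm2 v.
Proof.
  intros Hs; rewrite succ_prob_basis, vnorm2_vsum.
  assert (Hpt : forall x y z,
            (if Nat.eqb (label x y z) k then Cnorm2 (v x y z) else 0) = Cnorm2 (v x y z)).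
  { intros x y z; destruct (Nat.eqb_spec (label x y z) k) as [_ | Hne]; [reflexivity |].
    rewrite (Hs x y z Hne); unfold Cnorm2, C0; simpl; ring. }
  unfold vsum; rewrite !Hpt; reflexivity.
Qed.

Lemma vnorm2_normalize (v : vec) : 0 < vnorm2 v -> vnorm2 (normalize v) = 1.
Proof.
  intros Hv.
  assert (Hscale : vnorm2 (normalize v) = / sqrt (vnorm2 v) * / sqrt (vnorm2 v) * vnorm2 v).
  { assert (Hr : forall r z, Cnorm2 (Cmul (RtoC r) z) = r * r * Cnorm2 z)
      by (intros; unfold Cnorm2, Cmul, RtoC; simpl; ring).
    unfold normalize, vscale, vnorm2; rewrite !Hr; ring. }
  rewrite Hscale, <- Rinv_mult, sqrt_sqrt by lra; field; lra.
Qed.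

Lemma normalize_supported (k : nat) (v : vec) :
  supported_on_label k v -> supported_on_label k (normalize v).
Proof. intros Hs x y z Hne; unfold normalize, vscale; rewrite (Hs x y z Hne); ring. Qed.

Lemma pair_family_supported (f : nat -> C) (k : nat) :
  (k < 4)%nat -> supported_on_label k (pair_family f k).
Proof.
  intros Hk x y z Hne.
  destruct k as [|[|[|[|k]]]]; try lia;
    destruct x, y, z; cbn in Hne; try congruence; unfold_pairs; simpl; ring.
Qed.

Lemma vnorm2_pair_state (a b c : bool) (f : C) : vnorm2 (pair_state a b c f) = 1 + Cnorm2 f.
Proof.
  destruct a, b, c;
    unfold vnorm2, pair_state, vadd, vscale, ket, Cnorm2, Cadd, Cmul, C0, C1; simpl; ring.
Qed.

Lemma pair_family_LOCC (f : nat -> C) : perfectly_distinguishable_LOCC (pair_family f) 4.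
Proof.
  exists basis_protocol; split; [exact basis_protocol_valid |].
  intros k Hk.
  assert (Hpos : 0 < vnorm2 (pair_family f k)).
  { destruct k as [|[|[|[|k]]]]; simpl pair_family; rewrite vnorm2_pair_state;
      pose proof (Cnorm2_nonneg (f 0%nat)); pose proof (Cnorm2_nonneg (f 1%nat));
      pose proof (Cnorm2_nonneg (f 2%nat)); pose proof (Cnorm2_nonneg (f 3%nat)); lra. }
  rewrite succ_prob_supported by (apply normalize_supported, pair_family_supported, Hk).
  exact (vnorm2_normalize _ Hpos).
Qed.

(** The coefficients s·e^{iθ_k}; [PhiS] and [PsiS] are the pair families
    with s = 1 and s = -1 respectively. *)
Definition phases (s t1 t2 t3 t4 : R) (k : nat) : C :=
  phase s (match k with 0%nat => t1 | 1%nat => t2 | 2%nat => t3 | _ => t4 end).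

Theorem mainTheorem10 (t1 t2 t3 t4 : R) :
  0 <= t1 -> t1 <= t2 -> t2 <= t3 -> t3 <= t4 -> t4 < 2 * PI ->
  t4 - t3 <> t2 - t1 ->
  ((forall v : vec, orth_compl (PhiS t1 t2 t3 t4) 4 v <-> in_span (PsiS t1 t2 t3 t4) 4 v) /\
   (forall v : vec, in_span (PhiS t1 t2 t3 t4) 4 v -> is_product v -> vec_eq v vzero) /\
   (forall v : vec, in_span (PsiS t1 t2 t3 t4) 4 v -> is_product v -> vec_eq v vzero) /\
   unextendible_basis (PhiS t1 t2 t3 t4) 4 /\
   unextendible_basis (PsiS t1 t2 t3 t4) 4) /\
  perfectly_distinguishable_LOCC (PhiS t1 t2 t3 t4) 4.
Proof.
  intros h1 h2 h3 h4 h5 h6.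
  set (fp := phases 1 t1 t2 t3 t4); set (fm := phases (-1) t1 t2 t3 t4).
  change (PhiS t1 t2 t3 t4) with (pair_family fp).
  change (PsiS t1 t2 t3 t4) with (pair_family fm).
  assert (Hneg : forall k, fm k = Copp (fp k)) by (intros k; apply phase_neg).
  assert (Up : forall k, (k < 4)%nat -> unimodular (fp k))
    by (intros; apply phase_unimodular; ring).
  assert (Um : forall k, (k < 4)%nat -> unimodular (fm k))
    by (intros; apply phase_unimodular; ring).
  assert (Dp : Cmul (fp 0%nat) (fp 3%nat) <> Cmul (fp 1%nat) (fp 2%nat))
    by (apply phase_nondegenerate; assumption).
  assert (Dm : Cmul (fm 0%nat) (fm 3%nat) <> Cmul (fm 1%nat) (fm 2%nat))
    by (rewrite !Hneg; intros E; apply Dp;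
        transitivity (Cmul (Copp (fp 0%nat)) (Copp (fp 3%nat))); [ring | rewrite E; ring]).
  assert (NoProdP : forall v, in_span (pair_family fp) 4 v -> is_product v -> vec_eq v vzero)
    by (intros v; apply pair_span_no_product; auto using unimodular_neq0).
  assert (NoProdM : forall v, in_span (pair_family fm) 4 v -> is_product v -> vec_eq v vzero)
    by (intros v; apply pair_span_no_product; auto using unimodular_neq0).
  assert (OrthP : forall v, orth_compl (pair_family fp) 4 v <-> in_span (pair_family fm) 4 v)
    by (apply pair_family_orth_compl; auto).
  assert (OrthM : forall v, orth_compl (pair_family fm) 4 v <-> in_span (pair_family fp) 4 v)
    by (apply pair_family_orth_compl; [exact Um | intros k _; rewrite Hneg; ring]).
  split; [| exact (pair_family_LOCC fp)].
  split; [exact OrthP |]; split; [exact NoProdP |]; split; [exact NoProdM |].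
  (* Unextendibility: a vector orthogonal to one family lies in the other's span. *)
  split; split; try apply pair_family_lin_indep.
  - intros v Horth; apply NoProdM, OrthP, Horth.
  - intros v Horth; apply NoProdP, OrthM, Horth.
Qed.
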